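(* Let $n$ be a positive integer that is coprime to $2\cdot 3$, a multiple of $5$, and not a multiple of $5^2$. Then it is impossible to place $n^2$ queens on $\mathbb{Z}_n^3$ without conflict.
   Context: A queen on $\mathbb{Z}_n^d$ (here $d=3$) can move any number of times by a vector $\mathbf{x}\in\{-1,0,1\}^d\setminus\{\mathbf{0}\}$ (coordinates modulo $n$). Queens occupy distinct fields; two queens at distinct fields $\mathbf{u},\mathbf{v}\in\mathbb{Z}_n^d$ are in conflict if $\mathbf{v}-\mathbf{u}=t\mathbf{x}$ for some $t\in\mathbb{Z}_n$ and some nonzero $\mathbf{x}\in\{-1,0,1\}^d$. A placement is without conflict if no two queens are in conflict. *)

From mathcomp Require Import all_boot all_algebra.
Set Implicit Arguments. Unset Strict Implicit. Unset Printing Implicit Defensive.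
Import GRing.Theory.
Local Open Scope ring_scope.

(* Fields of the board Z_n^3 : functions from 'I_3 to 'Z_n (use only with n > 1). *)
Definition field (n : nat) := {ffun 'I_3 -> 'Z_n}.

Definition is_dir (n : nat) (x : field n) : Prop :=
  (forall i, x i = 0 \/ x i = 1 \/ x i = -1) /\ (exists i, x i != 0).

Definition in_conflict (n : nat) (u v : field n) : Prop :=
  u <> v /\ exists (t : 'Z_n) (x : field n),
    is_dir x /\ forall i, v i - u i = t * x i.

Definition conflict_free (n : nat) (Q : {set field n}) : Prop :=
  forall u v, u \in Q -> v \in Q -> ~ in_conflict u v.

(* Reduce modulo 5.  A conflict-free set Q of n^2 queens meets every line of
   Z_n^3 with a queen direction d in exactly one queen, and each line of Z_5^3
   with direction d is the image of (n/5)^2 such lines.  The certificate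
   weights the lines of Z_5^3 in 13 directions so that the 13 weighted lines
   through any point have total weight 0 in Z_5, while all lines together have
   total weight 1.  Summing over the queens the weights of the lines through
   their images thus gives 0, but also (n/5)^2, which is nonzero in Z_5 unless
   25 divides n. *)

From HB Require Import structures.
From mathcomp Require Import all_boot all_algebra.
Set Implicit Arguments. Unset Strict Implicit. Unset Printing Implicit Defensive.
Import GRing.Theory.
Local Open Scope ring_scope.

Lemma sumr_nat_periodic (V : nmodType) (m q : nat) (F : nat -> V) :
  (forall k, F (k + m)%N = F k) ->
  \sum_(0 <= k < q * m) F k = (\sum_(0 <= k < m) F k) *+ q.
Proof.
move=> F_per; elim: q => [|q IHq]; first by rewrite big_geq.
rewrite mulSn (big_cat_nat _ (leq_addr _ _)) //= -{2}[m]add0n big_addn addKn.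
by rewrite (eq_bigr _ (fun k _ => F_per k)) IHq mulrS.
Qed.

Lemma reindex_in_card (R : Type) (idx : R) (op : Monoid.com_law idx)
    (I T : finType) (A : {set I}) (f : I -> T) (F : T -> R) :
  {in A &, injective f} -> #|A| = #|T| ->
  \big[op/idx]_(i in A) F (f i) = \big[op/idx]_t F t.
Proof.
move=> f_inj A_card; rewrite -big_imset //.
have -> : f @: A = [set: T].
  by apply/eqP; rewrite eqEcard subsetT cardsT card_in_imset // A_card leqnn.
by rewrite big_set.
Qed.

Lemma sum_Zp_nat (V : nmodType) p (G : nat -> V) :
  (1 < p)%N -> \sum_(x : 'Z_p) G x = \sum_(0 <= k < p) G k.
Proof. by case: p => [|[|p]] // _; rewrite big_mkord. Qed.

Lemma sum_Zp2_nat (V : nmodType) p (G : nat -> nat -> V) : (1 < p)%N ->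
  \sum_(k : 'Z_p * 'Z_p) G k.1 k.2 = \sum_(0 <= a < p) \sum_(0 <= b < p) G a b.
Proof.
move=> p_gt1; rewrite -(pair_bigA _ (fun a b : 'Z_p => G a b)).
rewrite (sum_Zp_nat (fun a => \sum_(b : 'Z_p) G a b)) //.
by apply: eq_bigr => a _; rewrite (sum_Zp_nat (G a)).
Qed.

Section ReduceMod.

Variables n m : nat.
Hypotheses (n_gt0 : (0 < n)%N) (m_gt1 : (1 < m)%N) (m_dvd_n : (m %| n)%N).

Definition reduce_mod (x : 'Z_n) : 'Z_m := (x : nat)%:R.

Let n_gt1 : (1 < n)%N := leq_trans m_gt1 (dvdn_leq n_gt0 m_dvd_n).

Lemma Zp_nat_mod_dvd k : ((k %% n)%:R : 'Z_m) = k%:R.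
Proof. by apply: val_inj; rewrite /= !val_Zp_nat // modn_dvdm. Qed.

Lemma reduce_mod_natr k : reduce_mod k%:R = k%:R.
Proof. by rewrite /reduce_mod val_Zp_nat ?Zp_nat_mod_dvd. Qed.

Lemma reduce_modD : {morph reduce_mod : x y / x + y}.
Proof.
by move=> x y; rewrite -[x]natr_Zp -[y]natr_Zp -natrD !reduce_mod_natr natrD.
Qed.

Lemma reduce_modB : {morph reduce_mod : x y / x - y}.
Proof.
by move=> x y; apply: (addIr (reduce_mod y)); rewrite -reduce_modD !subrK.
Qed.

Lemma sum_reduce_mod (V : nmodType) (F : 'Z_m -> V) :
  \sum_(x : 'Z_n) F (reduce_mod x) = (\sum_a F a) *+ (n %/ m).
Proof.
rewrite (sum_Zp_nat (fun k => F k%:R)) // -{1}(divnK m_dvd_n).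
rewrite sumr_nat_periodic => [|k]; last by rewrite natrD pchar_Zp ?addr0.
rewrite -(sum_Zp_nat (fun k => F k%:R)) //.
by under eq_bigr do rewrite natr_Zp.
Qed.

Lemma sum_reduce_mod2 (V : nmodType) (F : 'Z_m * 'Z_m -> V) :
  \sum_(x : 'Z_n * 'Z_n) F (reduce_mod x.1, reduce_mod x.2) =
  (\sum_a F a) *+ (n %/ m) ^ 2.
Proof.
rewrite -(pair_bigA _ (fun x y => F (reduce_mod x, reduce_mod y))) /=.
under eq_bigr do rewrite (sum_reduce_mod (fun b => F (_, b))).
rewrite sumrMnl (sum_reduce_mod (fun a => \sum_b F (a, b))).
rewrite -mulrnA mulnn pair_bigA.
by congr (_ *+ _); apply: eq_bigr => -[].
Qed.

End ReduceMod.

Arguments reduce_mod {n} m x.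

(* (j, (a, b)) encodes the direction vector with coordinate 1 at j and
   coordinates a and b at lift j 0 and lift j 1. *)
Definition direction := ('I_3 * (int * int))%type.

Definition dir_coord (d : direction) (i : 'I_3) : int :=
  if unlift d.1 i is Some k then (if k == ord0 then d.2.1 else d.2.2) else 1.

Definition unit_steps : seq int := [:: 0; 1; -1].

Definition queen_direction (d : direction) : bool :=
  (d.2.1 \in unit_steps) && (d.2.2 \in unit_steps).

Section ProjAlong.

Variable R : zmodType.

Definition proj_along (d : direction) (p : 'I_3 -> R) : R * R :=
  (p (lift d.1 ord0) - p d.1 *~ d.2.1, p (lift d.1 ord_max) - p d.1 *~ d.2.2).

Lemma eq_proj_along d p p' : p =1 p' -> proj_along d p = proj_along d p'.
Proof. by move=> eq_p; rewrite /proj_along !eq_p. Qed.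

Lemma proj_along_eq_line d p p' : proj_along d p = proj_along d p' ->
  forall i, p' i - p i = (p' d.1 - p d.1) *~ dir_coord d i.
Proof.
have shift x y x' y' c : x - y *~ c = x' - y' *~ c -> x' - x = (y' - y) *~ c.
  move=> e; rewrite mulrzBl -(subrK (y *~ c) x) -(subrKC (y' *~ c) x') -e.
  by rewrite addrKA.
case=> eq0 eq1 i; rewrite /dir_coord; case: unliftP => [k ->|->]; last first.
  by rewrite mulr1z.
have [->|->] : k = ord0 \/ k = ord_max.
  by case: k => [[|[|//]] ?]; [left | right]; apply: val_inj.
- exact: shift.
- exact: shift.
Qed.

End ProjAlong.

Lemma proj_along_morph (U V : zmodType) (f : U -> V) d p :
  {morph f : x y / x - y} ->
  proj_along d (f \o p) = (f (proj_along d p).1, f (proj_along d p).2).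
Proof.
move=> fB; pose fA : {additive U -> V} :=
  HB.pack f (GRing.isZmodMorphism.Build U V f fB).
by rewrite /proj_along /= -[f]/(fA : _ -> _) !raddfB !raddfMz.
Qed.

Section Placement.

Variables (n : nat) (Q : {set field n}).
Hypothesis Q_free : conflict_free Q.

Lemma queen_direction_is_dir d :
  queen_direction d -> is_dir [ffun i => (dir_coord d i)%:~R : 'Z_n].
Proof.
have unit_stepP c : c \in unit_steps ->
    (c%:~R : 'Z_n) = 0 \/ (c%:~R : 'Z_n) = 1 \/ (c%:~R : 'Z_n) = -1.
  by rewrite !inE => /or3P[] /eqP->; [left | right; left | right; right].
case/andP=> d1 d2; split=> [i | ]; last first.
  by exists d.1; rewrite ffunE /dir_coord unlift_none oner_neq0.
rewrite ffunE /dir_coord; case: unliftP => [k _ | _]; last by right; left.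
by case: ifP => _; exact: unit_stepP.
Qed.

Lemma proj_along_injective d :
  queen_direction d -> {in Q &, injective (fun q : field n => proj_along d q)}.
Proof.
move=> dq u v uQ vQ /proj_along_eq_line uv; case: (u =P v) => // neq_uv.
case: (Q_free uQ vQ); split=> //.
exists (v d.1 - u d.1), [ffun i => (dir_coord d i)%:~R]; split.
  exact: queen_direction_is_dir.
by move=> i; rewrite ffunE uv mulrzr.
Qed.

Lemma sum_proj_along_reduce m (V : nmodType) d (G : 'Z_m * 'Z_m -> V) :
  (0 < n)%N -> (1 < m)%N -> (m %| n)%N -> #|Q| = (n ^ 2)%N ->
  queen_direction d ->
  \sum_(q in Q) G (proj_along d (reduce_mod m \o q)) =
  (\sum_a G a) *+ (n %/ m) ^ 2.
Proof.
move=> n_gt0 m_gt1 m_dvd_n Q_card dq.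
under eq_bigr do rewrite (proj_along_morph _ _ (reduce_modB n_gt0 m_gt1 m_dvd_n)).
rewrite (reindex_in_card _ (fun k => G (reduce_mod m k.1, reduce_mod m k.2))
  (proj_along_injective dq)); first exact: sum_reduce_mod2.
have n_gt1 : (1 < n)%N := leq_trans m_gt1 (dvdn_leq n_gt0 m_dvd_n).
by rewrite Q_card card_prod card_ord Zp_cast ?mulnn.
Qed.

End Placement.

(* Entry 5 a + b of a weight list is the weight of the line projecting to
   (a, b); omitted trailing entries are 0. *)
Definition certificate : seq (direction * seq nat) := [::
  (2, ( 0,  0), [:: 0; 0; 0; 0; 0;  1; 0; 3; 1; 4;  3; 4; 0; 2; 0;  4; 3; 4; 3; 0;  0; 0; 0; 1; 3]);
  (2, ( 0,  1), [:: 0; 0; 0; 0; 0;  2; 2; 4; 0; 0;  0; 2; 0; 1; 0;  0; 1; 2; 0; 0;  0; 0; 4; 4]);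
  (2, ( 0, -1), [:: 0; 0; 0; 0; 0;  2; 2; 4; 0; 0;  1; 4; 3; 0; 0;  0; 1; 2; 0; 0;  4; 3; 1]);
  (2, ( 1,  0), [:: 2; 1; 2; 3; 4;  3; 2; 1; 0; 4]);
  (2, ( 1,  1), [:: 3; 3; 2; 1; 0;  1; 2; 3; 4]);
  (2, ( 1, -1), [:: 4]);
  (2, (-1,  0), [:: 2]);
  (2, (-1,  1), [:: 4]);
  (2, (-1, -1), [:: 4]);
  (1, ( 0,  0), [:: 1]);
  (1, ( 1,  0), [:: 2]);
  (1, (-1,  0), [:: 2]);
  (0, ( 0,  0), [:: 1])].

Definition table_weight (w : seq nat) (k : 'Z_5 * 'Z_5) : 'Z_5 :=
  (nth 0 w (5 * k.1 + k.2))%:R.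

Lemma certificate_directions : all (fun dw => queen_direction dw.1) certificate.
Proof. by []. Qed.

Lemma certificate_point_sum (p : 'I_3 -> 'Z_5) :
  \sum_(dw <- certificate) table_weight dw.2 (proj_along dw.1 p) = 0.
Proof.
have p_nth : p =1 (fun i : 'I_3 => nth 0 [:: p 0; p 1; p 2] i).
  by case=> [[|[|[|//]]] i_lt3] /=; congr p; apply: val_inj.
under eq_bigr do rewrite (eq_proj_along _ p_nth).
apply/eqP; move: (p 0) (p 1) (p 2); rewrite unlock.
do 3!case=> [[|[|[|[|[|//]]]]] ?].
all: by vm_compute.
Qed.

Lemma certificate_total :
  \sum_(dw <- certificate) \sum_k table_weight dw.2 k = 1.
Proof.
under eq_bigr do
  rewrite /table_weight (sum_Zp2_nat (fun a b => (nth 0 _ (5 * a + b))%:R)) //.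
by apply/eqP; rewrite unlock; vm_compute.
Qed.

Local Close Scope ring_scope.

Theorem mainTheorem8 (n : nat) :
  0 < n -> coprime n 6 -> 5 %| n -> ~~ (25 %| n) ->
  ~ exists Q : {set field n}, #|Q| = n ^ 2 /\ conflict_free Q.
Proof.
move=> n_gt0 _ dvd5n /negP not_dvd25n [Q [Q_card Q_free]]; apply: not_dvd25n.
pose S := (\sum_(q in Q) \sum_(dw <- certificate)
             table_weight dw.2 (proj_along dw.1 (reduce_mod 5 \o q)))%R.
have S0 : S = 0%R by apply: big1 => q _; exact: certificate_point_sum.
have S_count : S = ((n %/ 5) ^ 2)%:R%R.
  rewrite /S exchange_big -certificate_total -sumrMnl.
  apply: eq_big_seq => dw /(allP certificate_directions) dq.
  exact: sum_proj_along_reduce.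
have /dvdnP[k def_q] : 5 %| n %/ 5.
  rewrite -[_ %| _]andbT -(Euclid_dvdX _ 2) // /dvdn -(val_Zp_nat (isT : 1 < 5)).
  by rewrite -S_count S0.
by rewrite -(divnK dvd5n) def_q -mulnA dvdn_mull.
Qed.
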